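(* Let $p$ be an odd prime and $G$ the non-abelian group of order $p^3$ and exponent $p$. Let $S$ be a sequence over $G$ of length $3p-2$ none of whose terms lies in $Z(G)$, and suppose that for some non-central $z$-class $\mathcal{K}$ of $G$ at least $2p-2$ terms of $S$ (counted with multiplicity) lie in $\mathcal{K}$. Then $S$ has a non-empty product-one subsequence.
   Context: $G = \langle x, y : x^p = y^p = 1,\ [y,x] \text{ central}\rangle$ is the Heisenberg group of order $p^3$ and exponent $p$, with $Z(G)=[G,G]$ of order $p$. For $g\in G\setminus Z(G)$, its $z$-class is $\mathcal{K}[g] = \{g^\lambda u : 1\le\lambda\le p-1,\ u\in Z(G)\} = C_G(g)\setminus Z(G)$; there are $p+1$ such non-central $z$-classes. A sequence over $G$ is a finite unordered list (multiset) of elements of $G$; a subsequence is a sub-multiset; a non-empty sequence is product-one if some ordering of its terms has product $1$. *)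

From mathcomp Require Import all_boot all_fingroup.
From mathcomp Require Import center abelian.
Set Implicit Arguments. Unset Strict Implicit. Unset Printing Implicit Defensive.

Local Open Scope group_scope.

(* The z-class K[g] = { g^l u : 1 <= l <= p-1, u in Z(G) } of g in G,
   where p is the (prime) exponent of G. *)
Definition zclass (gT : finGroupType) (G : {group gT}) (p : nat) (g : gT)
  : {set gT} :=
  [set g ^+ l * u | l : 'I_p, u : gT in 'Z(G) & 0 < l].

Definition product_one (gT : finGroupType) (T : seq gT) : Prop :=
  T != [::] /\ exists T' : seq gT, perm_eq T' T /\ \prod_(x <- T') x = 1.

Definition has_prod_one_subseq (gT : finGroupType) (S : seq gT) : Prop :=
  exists m : bitseq, product_one (mask m S).

From HB Require Import structures.
From mathcomp Require Import all_boot all_algebra all_fingroup all_solvable.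
From mathcomp Require Import ring zify.
From Stdlib Require Import Classical.
Set Implicit Arguments. Unset Strict Implicit. Unset Printing Implicit Defensive.

Import GRing.Theory.

(* The z-class of g lies in the subgroup H = <g> Z(G), isomorphic to
   C_p x C_p and of index p in G.  Set aside 2p-2 terms of S in the z-class
   and let B be the remaining p terms.  As |G : H| = p, two of the p+1
   prefix products of B lie in the same left coset of H, so some non-empty
   block W of consecutive terms of B has its product w in H.  By Olson's
   theorem the Davenport constant of C_p x C_p is 2p-1, so the 2p-1
   elements of H given by the set-aside terms and w have a non-empty
   product-one subsequence; replacing w by the terms of W yields one in S.

   Olson's theorem is proved in the group algebra
   F_p[C_p x C_p] = F_p[u, w]/(u^p, w^p), u = x - 1, w = y - 1: the product
   of the 1 - x^a y^b over a sequence of 2p-1 elements lies in the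
   (2p-1)-st power of the augmentation ideal, hence vanishes, while its
   coefficient at 1 would be 1 if no non-empty subsequence summed to 0. *)

Lemma seq_preimage (T1 : Type) (T2 : eqType) (f : T1 -> T2) (t : seq T2) :
  (forall y, y \in t -> exists x, y = f x) -> exists s, t = map f s.
Proof.
elim: t => [|y t IH] ft; first by exists [::].
have [x ->] := ft y (mem_head y t).
have [s ->] := IH (fun y' t_y' => ft y' (mem_behead (s := y :: t) t_y')).
by exists (x :: s).
Qed.

Lemma perm_split_count (T : eqType) (a : pred T) (s : seq T) n :
  (n <= count a s)%N -> exists A B, [/\ perm_eq s (A ++ B), size A = n & all a A].
Proof.
move=> le_n; exists (take n (filter a s)), (drop n (filter a s) ++ filter (predC a) s).
split; first by rewrite catA cat_take_drop perm_sym perm_filterC.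
  by rewrite size_takel // size_filter.
by apply/allP => x /mem_take; rewrite mem_filter => /andP [].
Qed.

Definition zero_sum_mod p (t : seq (nat * nat)) : bool :=
  (p %| sumn (unzip1 t)) && (p %| sumn (unzip2 t)).

Section OlsonTheorem.
Local Open Scope ring_scope.

Lemma expr1D_factor (R : pzRingType) (x : R) n :
  exists y, (1 + x) ^+ n = 1 + x * y.
Proof.
exists (\sum_(i < n) (1 + x) ^+ i).
by rewrite -[X in X * _](addKr 1) [-1 + _]addrC -subrX1 [RHS]addrC subrK.
Qed.

Variables (R : comNzRingType) (p : nat).
Hypothesis charRp : p \in [pchar R].

(* [idcoef q] is the coefficient at 1 of q(x - 1) in R[C_p] = R[x]/(x^p - 1):
   in characteristic p, (x - 1)^a vanishes there for a >= p.  [idcoef2] is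
   its analogue for R[C_p x C_p], with 'Y and 'X standing for x - 1, y - 1. *)
Definition idcoef (q : {poly R}) : R := \sum_(a < p) q`_a * (-1) ^+ a.

Lemma idcoef_is_zmod_morphism : zmod_morphism idcoef.
Proof.
by move=> q r; rewrite -sumrB; apply: eq_bigr => a _; rewrite coefB mulrBl.
Qed.

HB.instance Definition _ :=
  GRing.isZmodMorphism.Build {poly R} R idcoef idcoef_is_zmod_morphism.

Lemma idcoefMC q c : idcoef (q * c%:P) = idcoef q * c.
Proof.
by rewrite /idcoef mulr_suml; apply: eq_bigr => a _; rewrite coefMC mulrAC.
Qed.

Lemma idcoef_mulXn a q : (p <= a)%N -> idcoef ('X^a * q) = 0.
Proof.
move=> le_pa; rewrite /idcoef big1 // => i _.
by rewrite coefXnM (leq_trans (ltn_ord i) le_pa) mul0r.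
Qed.

Lemma idcoef_horner (q : {poly R}) : (size q <= p)%N -> idcoef q = q.[-1].
Proof. by move=> szq; rewrite (horner_coef_wide _ szq). Qed.

Lemma idcoef_exp1DX c : idcoef ((1 + 'X) ^+ c) = (p %| c)%:R.
Proof.
have p_pr := pcharf_prime charRp.
have charPp : [pchar {poly R}].-nat p.
  by apply: sub_in_pnat (pnat_id p_pr) => q _ /eqnP ->; rewrite pchar_poly.
rewrite {1}(divn_eq c p) exprD mulnC exprM exprDn_pchar // expr1n.
have [y ->] := expr1D_factor ('X^p : {poly R}) (c %/ p).
rewrite mulrDl mul1r raddfD /= -mulrA idcoef_mulXn // addr0 idcoef_horner.
  by rewrite hornerE !hornerE subrr expr0n /dvdn.
have -> : (1 + 'X : {poly R}) = 'X - (-1)%:P by rewrite polyCN opprK addrC.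
by rewrite size_exp_XsubC ltn_mod prime_gt0.
Qed.

Definition idcoef2 (Q : {poly {poly R}}) : R :=
  \sum_(b < p) idcoef Q`_b * (-1) ^+ b.

Lemma idcoef2_is_zmod_morphism : zmod_morphism idcoef2.
Proof.
by move=> Q T; rewrite -sumrB; apply: eq_bigr => b _; rewrite coefB raddfB mulrBl.
Qed.

HB.instance Definition _ :=
  GRing.isZmodMorphism.Build {poly {poly R}} R idcoef2 idcoef2_is_zmod_morphism.

Lemma idcoef2_CM q r : idcoef2 (q%:P * r^:P) = idcoef q * idcoef r.
Proof.
rewrite mulr_sumr; apply: eq_bigr => b _.
by rewrite coefCM coef_map idcoefMC mulrA.
Qed.

Lemma idcoef2_exp1D c d :
  idcoef2 ((1 + 'Y) ^+ c * (1 + 'X) ^+ d) = (p %| c)%:R * (p %| d)%:R.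
Proof.
rewrite -!idcoef_exp1DX -idcoef2_CM.
by congr (idcoef2 (_ * _)); rewrite rmorphXn rmorphD rmorph1 //= map_polyX.
Qed.

Lemma idcoef2_YX_high a b T :
  (2 * p - 1 <= a + b)%N -> idcoef2 ('Y ^+ a * 'X ^+ b * T) = 0.
Proof.
move=> hab; rewrite /idcoef2 big1 // => j _.
rewrite -rmorphXn /= -mulrA [_ * T]mulrC mulrA coefMXn.
case: ifPn => [_ | ]; first by rewrite raddf0 mul0r.
rewrite -leqNgt => le_bj; have lt_jp := ltn_ord j.
by rewrite coefCM idcoef_mulXn ?mul0r //; lia.
Qed.

Definition olson_prod (s : seq (nat * nat)) : {poly {poly R}} :=
  \prod_(x <- s) (1 - (1 + 'Y) ^+ x.1 * (1 + 'X) ^+ x.2).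

Lemma idcoef2_olson_prod_high s a b T :
  (2 * p - 1 <= a + b + size s)%N ->
  idcoef2 ('Y ^+ a * 'X ^+ b * olson_prod s * T) = 0.
Proof.
elim: s a b T => [|x s IH] a b T /= hs.
  by rewrite /olson_prod big_nil mulr1 idcoef2_YX_high //; lia.
rewrite /olson_prod big_cons -/(olson_prod s).
have [y1 ->] := expr1D_factor ('Y : {poly {poly R}}) x.1.
have [y2 ->] := expr1D_factor ('X : {poly {poly R}}) x.2.
have -> : 'Y ^+ a * 'X ^+ b * ((1 - (1 + 'Y * y1) * (1 + 'X * y2)) * olson_prod s) * T
    = 'Y ^+ a.+1 * 'X ^+ b * olson_prod s * (- (y1 + y1 * 'X * y2) * T)
      + 'Y ^+ a * 'X ^+ b.+1 * olson_prod s * (- y2 * T).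
  by rewrite !exprS; ring.
by rewrite raddfD /= !IH ?addr0 //; lia.
Qed.

Lemma idcoef2_exp1D_olson_prod c d s :
  (forall m, ~~ zero_sum_mod p ((c, d) :: mask m s)) ->
  idcoef2 ((1 + 'Y) ^+ c * (1 + 'X) ^+ d * olson_prod s) = 0.
Proof.
elim: s c d => [|x s IH] c d zsf.
  have := zsf [::]; rewrite /zero_sum_mod /= !addn0.
  rewrite /olson_prod big_nil mulr1 idcoef2_exp1D.
  by case: (p %| c)%N; case: (p %| d)%N; rewrite ?mulr0 ?mul0r.
have -> : (1 + 'Y) ^+ c * (1 + 'X) ^+ d * olson_prod (x :: s)
    = (1 + 'Y) ^+ c * (1 + 'X) ^+ d * olson_prod s
      - (1 + 'Y) ^+ (c + x.1)%N * (1 + 'X) ^+ (d + x.2)%N * olson_prod s.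
  by rewrite /olson_prod big_cons -/(olson_prod s) !exprD; ring.
rewrite raddfB /= !IH ?subr0 // => m; last exact: zsf (false :: m).
by have := zsf (true :: m); rewrite /zero_sum_mod /= !addnA; apply.
Qed.

Lemma idcoef2_olson_prod s :
  (forall m, mask m s != [::] -> ~~ zero_sum_mod p (mask m s)) ->
  idcoef2 (olson_prod s) = 1.
Proof.
elim: s => [|x s IH] zsf.
  rewrite /olson_prod big_nil.
  by have := idcoef2_exp1D 0 0; rewrite !expr0 mulr1 dvdn0 mulr1.
rewrite /olson_prod big_cons mulrBl mul1r raddfB /= IH => [|m ne]; last first.
  by apply: zsf (false :: m) ne.
by rewrite idcoef2_exp1D_olson_prod ?subr0 // => m; apply: zsf (true :: m) _.
Qed.

Lemma olson_zero_sum s : (2 * p - 1 <= size s)%N ->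
  exists2 m, mask m s != [::] & zero_sum_mod p (mask m s).
Proof.
move=> hs; apply: NNPP => nozs.
have zsf m : mask m s != [::] -> ~~ zero_sum_mod p (mask m s).
  by move=> ne; apply/negP => zs; apply: nozs; exists m.
have := @idcoef2_olson_prod_high s 0 0 1 hs.
rewrite !expr0 !mul1r mulr1 idcoef2_olson_prod //.
by move/eqP; rewrite oner_eq0.
Qed.

End OlsonTheorem.

Local Open Scope group_scope.

Lemma prod_expg2 (gT : finGroupType) (g z : gT) (s : seq (nat * nat)) :
  commute g z ->
  \prod_(x <- [seq g ^+ ij.1 * z ^+ ij.2 | ij <- s]) x =
  g ^+ sumn (unzip1 s) * z ^+ sumn (unzip2 s).
Proof.
move=> cgz; elim: s => [|[i j] s IH]; first by rewrite big_nil mulg1.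
rewrite big_cons IH /= !expgD -!mulgA; congr (_ * _).
by rewrite !mulgA; congr (_ * _); apply: commuteX2; apply: commute_sym.
Qed.

Lemma block_prod_mem (gT : finGroupType) (G H : {group gT}) (B : seq gT) :
  H \subset G -> {subset B <= G} -> (#|G : H| <= size B)%N ->
  exists W, [/\ W != [::], subseq W B & \prod_(x <- W) x \in H].
Proof.
move=> sHG sBG le_iB.
pose pr (i : nat) := \prod_(x <- take i B) x.
have prG i : pr i \in G.
  by rewrite /pr big_seq; apply: group_prod => x /mem_take/sBG.
pose f (i : 'I_(size B).+1) := pr i *: H.
have /injectivePn [i [j ne_ij eq_ij]] : ~~ injectiveb f.
  apply: contraL le_iB => /injectiveP inj_f; rewrite -ltnNge.
  rewrite -card_lcosets -(card_ord (size B).+1) -(card_codom inj_f).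
  apply: subset_leq_card; apply/subsetP => _ /codomP [k ->].
  by rewrite mem_lcosets mulGSid ?prG.
wlog lt_ij : i j ne_ij eq_ij / (i < j)%N.
  move=> wlog; case: (ltngtP i j) => [lt_ij | lt_ji | /val_inj eq_ji].
  - exact: wlog ne_ij eq_ij lt_ij.
  - by apply: wlog (esym eq_ij) lt_ji; rewrite eq_sym.
  - by rewrite eq_ji eqxx in ne_ij.
exists (drop i (take j B)); split.
- by rewrite -size_eq0 size_drop size_takel ?subn_eq0 -?ltnNge // -ltnS.
- exact: subseq_trans (drop_subseq _ _) (take_subseq _ _).
have /lcosetP [h hH] : pr j \in pr i *: H by rewrite -[_ *: H]/(f i) eq_ij lcoset_refl.
have -> : pr j = pr i * \prod_(x <- drop i (take j B)) x.
  by rewrite /pr -{1}(cat_take_drop i (take j B)) big_cat take_takel // ltnW.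
by move/mulgI ->.
Qed.

Lemma mask_rcons_prod (gT : finGroupType) (A W : seq gT) (m : bitseq) :
  W != [::] ->
  exists V, [/\ subseq V (A ++ W),
    (V == [::]) = (mask m (rcons A (\prod_(x <- W) x)) == [::])
  & \prod_(x <- V) x = \prod_(x <- mask m (rcons A (\prod_(x <- W) x))) x].
Proof.
move=> nW; elim: A m => [|a A IH] [|b m]; try by exists [::]; split; rewrite ?sub0seq.
  case: b => /=; last by exists [::]; rewrite sub0seq mask0.
  by exists W; rewrite subseq_refl mask0 big_seq1 (negbTE nW).
have [V [sV eV pV]] := IH m; case: b.
- by exists (a :: V); rewrite /= eqxx sV !big_cons pV.
- by exists V; split=> //; apply: subseq_trans sV (subseq_cons _ _).
Qed.

Lemma has_prod_one_subseq_perm (gT : finGroupType) (S S' V : seq gT) :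
  perm_eq S S' -> subseq V S' -> V != [::] -> \prod_(x <- V) x = 1 ->
  has_prod_one_subseq S.
Proof.
move=> pSS' sVS' nV V1.
have /count_maskP [m _ pV] : forall x, (count_mem x V <= count_mem x S)%N.
  by move=> x; rewrite (seq.permP pSS'); apply: leq_count_subseq.
exists m; split; last by exists V.
by rewrite -size_eq0 -(perm_size pV) size_eq0.
Qed.

Lemma prod_one_mask_cycle2 (gT : finGroupType) (g z : gT) p (t : seq gT) :
  prime p -> commute g z -> g ^+ p = 1 -> z ^+ p = 1 ->
  {subset t <= <[g]> * <[z]>} -> (2 * p - 1 <= size t)%N ->
  exists2 m, mask m t != [::] & \prod_(x <- mask m t) x = 1.
Proof.
move=> p_pr cgz gp zp sTgz.
have [s ->] : exists s, t = [seq g ^+ ij.1 * z ^+ ij.2 | ij <- s].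
  apply: seq_preimage => _ /sTgz/mulsgP [_ _ /cycleP [i ->] /cycleP [j ->] ->].
  by exists (i, j).
rewrite size_map => szt.
have [m nm /andP [/dvdnP [k1 e1] /dvdnP [k2 e2]]] := olson_zero_sum (pchar_Fp p_pr) szt.
exists m; rewrite -map_mask; first by rewrite -size_eq0 size_map size_eq0.
by rewrite prod_expg2 // e1 e2 !expgM !(expgAC _ _ p) gp zp !expg1n mulg1.
Qed.

Lemma card_center_p3 (gT : finGroupType) (G : {group gT}) p :
  prime p -> #|G| = (p ^ 3)%N -> ~~ abelian G -> #|'Z(G)| = p.
Proof.
move=> p_pr cardG nabG; have pG : p.-group G by rewrite /pgroup cardG pnatX pnat_id.
apply: card_center_extraspecial pG (p3group_extraspecial pG nabG _).
by rewrite cardG pfactorK.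
Qed.

Lemma cycle_center_joinE (gT : finGroupType) (G : {group gT}) g :
  g \in G -> <[g]> <*> 'Z(G) = <[g]> * 'Z(G).
Proof.
move=> gG; apply: cent_joinEr.
by rewrite (subset_trans (subsetIr G _) (centS _)) // cycle_subG.
Qed.

Lemma index_cycle_center_p3 (gT : finGroupType) (G : {group gT}) p g :
  prime p -> #|G| = (p ^ 3)%N -> ~~ abelian G -> exponent G = p ->
  g \in G :\: 'Z(G) -> #|G : <[g]> <*> 'Z(G)| = p.
Proof.
move=> p_pr cardG nabG expG /setDP [gG gNZ].
have og : #[g] = p.
  apply/prime_nt_dvdP => //; last by rewrite -expG dvdn_exponent.
  by rewrite order_eq1; apply: contraNneq gNZ => ->; apply: group1.
have TIgZ : <[g]> :&: 'Z(G) = 1.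
  by apply: prime_TIg; rewrite ?cycle_subG // -orderE og.
have sHG : <[g]> <*> 'Z(G) \subset G by rewrite join_subG cycle_subG gG center_sub.
have cardH : #|<[g]> <*> 'Z(G)| = (p * p)%N.
  by rewrite cycle_center_joinE // TI_cardMg // -orderE og (card_center_p3 p_pr).
have /eqP := Lagrange sHG; rewrite cardH cardG -mulnA (expnS p 2).
rewrite eqn_pmul2l ?prime_gt0 // (expnS p 1) expn1.
by rewrite eqn_pmul2l ?prime_gt0 //; exact: eqP.
Qed.

Lemma center_p3_cycle (gT : finGroupType) (G : {group gT}) p g :
  prime p -> #|G| = (p ^ 3)%N -> ~~ abelian G -> exponent G = p -> g \in G ->
  exists z, [/\ 'Z(G) = <[z]>, z ^+ p = 1 & commute g z].
Proof.
move=> p_pr cardG nabG expG gG.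
have [z defZ] : exists z, 'Z(G) = <[z]>.
  by apply/cyclicP/prime_cyclic; rewrite (card_center_p3 p_pr).
have zZ : z \in 'Z(G) by rewrite defZ cycle_id.
exists z; split=> //; first by rewrite -expG expg_exponent // (subsetP (center_sub G)).
by have /centerP [_ /(_ g gG)] := zZ.
Qed.

Lemma zclass_sub (gT : finGroupType) (G : {group gT}) p g :
  zclass G p g \subset <[g]> * 'Z(G).
Proof.
apply/subsetP => x /imset2P [l u _]; rewrite inE => /andP [uZ _] ->.
exact: mem_mulg (mem_cycle _ _) uZ.
Qed.

Theorem theorem2p7 (gT : finGroupType) (G : {group gT}) (p : nat)
  (S : seq gT) :
  prime p -> odd p ->
  #|G| = (p ^ 3)%N -> ~~ abelian G -> exponent G = p ->
  {subset S <= G} ->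
  (forall x, x \in S -> x \notin 'Z(G)) ->
  size S = (3 * p - 2)%N ->
  (exists2 g, g \in G :\: 'Z(G) &
     (2 * p - 2 <= count (fun x => x \in zclass G p g) S)%N) ->
  has_prod_one_subseq S.
Proof.
move=> p_pr _ cardG nabG expG sSG _ sizeS [g gGZ countK].
have /setDP [gG _] := gGZ.
have [z [defZ zp cgz]] := center_p3_cycle p_pr cardG nabG expG gG.
have gp : g ^+ p = 1 by rewrite -expG expg_exponent.
pose H := (<[g]> <*> 'Z(G))%G.
have HE : H :=: <[g]> * <[z]> by rewrite /= cycle_center_joinE // defZ.
have [A [B [pS sizeA AK]]] := perm_split_count countK.
have sizeB : size B = p by move: (perm_size pS); rewrite size_cat sizeS sizeA; lia.
have [W [nW sWB WH]] : exists W, [/\ W != [::], subseq W B & \prod_(x <- W) x \in H].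
  apply: (@block_prod_mem _ G); first by rewrite join_subG cycle_subG gG center_sub.
    by move=> x Bx; apply: sSG; rewrite (perm_mem pS) mem_cat Bx orbT.
  by rewrite (index_cycle_center_p3 p_pr) ?sizeB.
pose w := \prod_(x <- W) x.
have sAwH : {subset rcons A w <= <[g]> * <[z]>}.
  move=> x; rewrite mem_rcons inE => /predU1P [-> | Ax]; first by rewrite -HE.
  by rewrite -defZ (subsetP (zclass_sub G p g)) // (allP AK).
have sizeAw : (2 * p - 1 <= size (rcons A w))%N.
  by rewrite size_rcons sizeA; lia.
have [m nm m1] := prod_one_mask_cycle2 p_pr cgz gp zp sAwH sizeAw.
have [V [sV eV pV]] := mask_rcons_prod A m nW.
have sVAB := subseq_trans sV (cat_subseq (subseq_refl A) sWB).
by apply: has_prod_one_subseq_perm pS sVAB _ _; rewrite ?eV ?pV.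
Qed.
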